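(* Let $\lambda\neq0$ and $\alpha,\beta\in\mathbb R$ with $\tau\bar\tau=\alpha^2-\lambda\beta^2\neq0$. Let $v\in\mathfrak g$, $v\neq0$, and $x,y,z\in\mathbb R$ satisfy $$-(\lambda x^2+z^2)\langle v,v\rangle=\mu,\qquad -2xz\,\langle v,v\rangle=\nu .$$ Then the maps $C=x\,[v,\cdot]$, $A=\lambda C$, $B=y\,vv^t+z\,[v,\cdot]$ satisfy the four coupled equations of the context, and the corresponding $r=r'+K_\tau$ is a compatible $r$-matrix (for every value of $y\in\mathbb R$). Conversely, if $\lambda\neq0$, $A=\lambda C$, $C=x[v,\cdot]$ with $v\neq0$, and $B=y\,vv^t+[w,\cdot]$ with $w\in\mathfrak g$ and $y\neq0$, and $A,B,C$ satisfy these four equations, then $w=zv$ for some $z\in\mathbb R$ and the two displayed normalisation conditions hold.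
   Context: Let $\mathfrak g$ denote either $so(3)$ or $so(2,1)$, with basis $J_0,J_1,J_2$ and metric $\eta=\mathrm{diag}(1,1,1)$ (for $so(3)$) or $\eta=\mathrm{diag}(1,-1,-1)$ (for $so(2,1)$); indices are raised and lowered with $\eta$, summation over repeated indices is implied, $\epsilon_{abc}$ is totally antisymmetric with $\epsilon_{012}=\epsilon^{012}=1$, and $[J_a,J_b]=\epsilon_{abc}J^c$. The inner product on $\mathfrak g$ is $\langle J_a,J_b\rangle=\eta_{ab}$. For a linear map $F:\mathfrak g\to\mathfrak g$, $F^t$ denotes its transpose with respect to $\langle\cdot,\cdot\rangle$; for $v\in\mathfrak g$, $v^t=\langle v,\cdot\rangle$, so $vu^t$ is the map $X\mapsto\langle u,X\rangle v$; $[u,\cdot]$ is the map $X\mapsto[u,X]$; $\mathrm{id}$ is the identity and $\mathrm{tr}$ the trace. For $\lambda\in\mathbb R$, $\mathfrak g_\lambda$ is the real six-dimensional Lie algebra with basis $J_a,P_a$ and brackets $[J_a,J_b]=\epsilon_{abc}J^c$, $[J_a,P_b]=\epsilon_{abc}P^c$, $[P_a,P_b]=\lambda\epsilon_{abc}J^c$. For real $\alpha,\beta$ with $\tau\bar\tau:=\alpha^2-\lambda\beta^2\neq0$ set $K_\tau=\frac{\alpha}{\tau\bar\tau}(J_a\otimes P^a+P_a\otimes J^a)-\frac{\beta}{\tau\bar\tau}(\lambda J_a\otimes J^a+P_a\otimes P^a)$, $\mu=\frac{\alpha^2+\lambda\beta^2}{(\tau\bar\tau)^2}$, $\nu=-\frac{2\alpha\beta}{(\tau\bar\tau)^2}$.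 For $r=\sum_i x_i\otimes y_i\in\mathfrak g_\lambda\otimes\mathfrak g_\lambda$ put $r_{12}=\sum_i x_i\otimes y_i\otimes1$, $r_{13}=\sum_i x_i\otimes1\otimes y_i$, $r_{23}=\sum_i1\otimes x_i\otimes y_i$, $[[r,r]]=[r_{12},r_{13}]+[r_{12},r_{23}]+[r_{13},r_{23}]$; a compatible $r$-matrix is $r=r'+K_\tau$ with $r'$ antisymmetric and $[[r,r]]=0$. Given linear maps $A,B,C:\mathfrak g\to\mathfrak g$ with $A^t=-A$, $C^t=-C$, write $M_{ba}=\langle J_b,M(J_a)\rangle$ and set $r'=A_{ba}J^a\otimes J^b+B_{ba}(P^a\otimes J^b-J^b\otimes P^a)+C_{ba}P^a\otimes P^b$. The four coupled equations are: $\tfrac12\mathrm{tr}(A^2)-\tfrac{\lambda}{2}(\mathrm{tr}(B)^2-\mathrm{tr}(B^2))=\mu\lambda$; $\mathrm{tr}(CB)=\nu$; $(B-\mathrm{tr}(B)\mathrm{id})(B+B^t)+\tfrac12(\mathrm{tr}(B)^2-\mathrm{tr}(B^2))\mathrm{id}-CA+\lambda(C^2-\tfrac12\mathrm{tr}(C^2)\mathrm{id})=-\mu\,\mathrm{id}$; $-A(B+B^t)+(B^t-\mathrm{tr}(B)\mathrm{id})(\lambda C-A)-\mathrm{tr}(AB)\mathrm{id}=-\lambda\nu\,\mathrm{id}$. The paper's main theorem asserts that if $A,B,C$ satisfy these four equations then $r'+K_\tau$ is a compatible $r$-matrix. *)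

(* The Lie algebra g = so(3) (lor = false) or so(2,1) (lor = true)
   is represented in coordinates w.r.t. the basis J_0,J_1,J_2: an element
   u = u^a J_a is a column vector 'cV_3, a linear map F : g -> g is the matrix
   with F(J_b) = sum_a F a b J_a, acting by F *m u; composition is *m. *)
From HB Require Import structures.
From mathcomp Require Import all_boot all_order all_algebra.
Set Implicit Arguments. Unset Strict Implicit. Unset Printing Implicit Defensive.
Import Order.TTheory GRing.Theory Num.Theory.
Local Open Scope ring_scope.

Section Defs.
Variable R : realFieldType.
Variable lor : bool.  (* false: so(3), eta = diag(1,1,1); true: so(2,1), eta = diag(1,-1,-1) *)

(* diagonal entries of eta (eta is its own inverse, so eta^{ab} = eta_{ab}) *)
Definition etad (i : 'I_3) : R := if lor && (i != ord0) then -1 else 1.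
Definition eta : 'M[R]_3 := \matrix_(i, j) (if i == j then etad i else 0).

(* Levi-Civita symbol, eps_012 = eps^012 = 1 *)
Definition eps (i j k : 'I_3) : R :=
  if [&& i != j, j != k & i != k] then
    (if (j : nat) == ((i + 1) %% 3)%N then 1 else -1)
  else 0.

Definition ip (u v : 'cV[R]_3) : R := (u^T *m eta *m v) 0 0.

(* [u, .] : X |-> [u, X], with [J_a, J_b] = eps_abc J^c = eps_abc eta^cd J_d *)
Definition adm (u : 'cV[R]_3) : 'M[R]_3 :=
  \matrix_(d, b) \sum_a \sum_c u a 0 * eps a b c * eta c d.

(* transpose w.r.t. <.,.> : <F^t u, v> = <u, F v> *)
Definition gtr (F : 'M[R]_3) : 'M[R]_3 := eta *m F^T *m eta.

(* v u^t : X |-> <u, X> v *)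
Definition outer (v u : 'cV[R]_3) : 'M[R]_3 := v *m (u^T *m eta).

Definition four_eqs (lam mu nu : R) (A B C : 'M[R]_3) : Prop :=
  [/\ 2^-1 * \tr (A *m A) - lam / 2 * (\tr B ^+ 2 - \tr (B *m B)) = mu * lam,
      \tr (C *m B) = nu,
      (B - (\tr B)%:M) *m (B + gtr B) + (2^-1 * (\tr B ^+ 2 - \tr (B *m B)))%:M
        - C *m A + lam *: (C *m C - (2^-1 * \tr (C *m C))%:M) = - mu%:M
    & - A *m (B + gtr B) + (gtr B - (\tr B)%:M) *m (lam *: C - A)
        - (\tr (A *m B))%:M = - (lam * nu)%:M].

(* The Lie algebra g_lam: basis indexed by (false, a) = J_a, (true, a) = P_a. *)
Definition gidx := (bool * 'I_3)%type.

(* structure constants: [e_i, e_k] = sum_p sc i k p e_p *)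
Definition sc (lam : R) (i k p : gidx) : R :=
  let kind := match i.1, k.1, p.1 with
              | false, false, false => 1
              | false, true, true => 1
              | true, false, true => 1
              | true, true, false => lam
              | _, _, _ => 0 end in
  kind * \sum_c eps i.2 k.2 c * eta c p.2.

(* tensors in g_lam (x) g_lam, by their coefficients on e_i (x) e_j *)
Definition tensor2 := gidx -> gidx -> R.

(* [[r, r]] coefficient on e_p (x) e_q (x) e_s *)
Definition cyb (lam : R) (r : tensor2) (p q s : gidx) : R :=
  \sum_i \sum_k sc lam i k p * r i q * r k s
  + \sum_j \sum_k sc lam j k q * r p j * r k s
  + \sum_j \sum_l sc lam j l s * r p j * r q l.

(* M_{ba} = <J_b, M(J_a)> *)
Definition mco (M : 'M[R]_3) (b a : 'I_3) : R := (eta *m M) b a.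

(* coefficient of J_i (x) J_j in M_{ba} J^a (x) J^b *)
Definition up2 (M : 'M[R]_3) (i j : 'I_3) : R :=
  \sum_a \sum_b mco M b a * eta a i * eta b j.

(* r' = A_ba J^a(x)J^b + B_ba (P^a(x)J^b - J^b(x)P^a) + C_ba P^a(x)P^b *)
Definition rprime (A B C : 'M[R]_3) : tensor2 := fun p q =>
  match p.1, q.1 with
  | false, false => up2 A p.2 q.2
  | true, false => up2 B p.2 q.2
  | false, true => - up2 B q.2 p.2
  | true, true => up2 C p.2 q.2
  end.

Definition ttb (lam alpha beta : R) : R := alpha ^+ 2 - lam * beta ^+ 2.
Definition muT (lam alpha beta : R) : R :=
  (alpha ^+ 2 + lam * beta ^+ 2) / (ttb lam alpha beta) ^+ 2.
Definition nuT (lam alpha beta : R) : R :=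
  - (2 * alpha * beta) / (ttb lam alpha beta) ^+ 2.

(* K_tau = alpha/tt (J_a(x)P^a + P_a(x)J^a) - beta/tt (lam J_a(x)J^a + P_a(x)P^a) *)
Definition Ktau (lam alpha beta : R) : tensor2 := fun p q =>
  let t := ttb lam alpha beta in
  match p.1, q.1 with
  | false, true => alpha / t * eta p.2 q.2
  | true, false => alpha / t * eta p.2 q.2
  | false, false => - (beta / t) * lam * eta p.2 q.2
  | true, true => - (beta / t) * eta p.2 q.2
  end.

Definition antisym (r : tensor2) : Prop := forall p q, r p q = - r q p.

Definition compatible_rmatrix (lam alpha beta : R) (r : tensor2) : Prop :=
  exists r' : tensor2, antisym r' /\ (forall p q, r p q = r' p q + Ktau lam alpha beta p q)
    /\ (forall p q s, cyb lam r p q s = 0).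

End Defs.

From Pilot Require Import Defs.
From HB Require Import structures.
From mathcomp Require Import all_boot all_order all_algebra.
From mathcomp Require Import ring.
Import Order.TTheory GRing.Theory Num.Theory.
Local Open Scope ring_scope.
Set Implicit Arguments. Unset Strict Implicit. Unset Printing Implicit Defensive.

(* In the coordinates of the basis J_0, J_1, J_2 everything is polynomial in the entries of
   v, w and in x, y, z.  For the ansatz the four equations become the normalisation conditions,
   and [[r, r]] is a combination of two fixed 3-tensors of g_lam whose coefficients
   are (alpha^2 + lam beta^2)/(tt)^2 + (lam x^2 + z^2) <v, v> and
   -2 alpha beta/(tt)^2 + 2 x z <v, v>, i.e. mu - mu and nu - nu.
   Conversely, with B = y v v^t + [w, .] the off-diagonal entries of the third equation say
   that -2 y (v x w)_i v_j = 0 for i <> j, and the differences of its diagonal entries that the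
   products (v x w)_i v_i all agree; as v x w is orthogonal to v these vanish too, so v x w = 0
   and w = z v.  The first two equations are then the normalisation conditions. *)

Definition o0 : 'I_3 := @Ordinal 3 0 isT.
Definition o1 : 'I_3 := @Ordinal 3 1 isT.
Definition o2 : 'I_3 := @Ordinal 3 2 isT.

Lemma eq_mx_fun (T : Type) m n (f g : 'I_m -> 'I_n -> T) :
  \matrix_(i, j) f i j = \matrix_(i, j) g i j -> f =2 g.
Proof. by move/matrixP => E i j; move: (E i j); rewrite !mxE. Qed.

Lemma ord3P (i : 'I_3) : [\/ i = o0, i = o1 | i = o2].
Proof. by case: i => [[|[|[|m]]] Hm] //; [apply: Or31|apply: Or32|apply: Or33]; apply: val_inj. Qed.

Lemma big_ord3 (V : nmodType) (F : 'I_3 -> V) : \sum_(i < 3) F i = F o0 + F o1 + F o2.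
Proof. by rewrite !big_ord_recl big_ord0 addr0 addrA; congr (F _ + F _ + F _); apply: val_inj. Qed.

Lemma big_gidx (V : nmodType) (F : gidx -> V) : \sum_(p : gidx) F p =
  F (true, o0) + F (true, o1) + F (true, o2) + (F (false, o0) + F (false, o1) + F (false, o2)).
Proof.
rewrite (eq_bigr (fun p => (fun a b => F (a, b)) p.1 p.2)); last by case.
by rewrite -(pair_bigA _ (fun a b => F (a, b))) big_bool /= !big_ord3.
Qed.

(* Cyclic successor on ['I_3]; unlike [ordS] it reduces by [cbv] to [o0], [o1], [o2]. *)
Definition succ3 (i : 'I_3) : 'I_3 := match nat_of_ord i with 0 => o1 | 1 => o2 | _ => o0 end%N.

Section Coordinates.
Variable R : realFieldType.
Variable lor : bool.

(* Versions of [eps] and [etad] indexed by [nat], whose values at numerals reduce by [cbv]. *)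
Definition eps_nat (i j k : nat) : R := match i, j, k with
  | 0, 1, 2 | 1, 2, 0 | 2, 0, 1 => 1
  | 0, 2, 1 | 2, 1, 0 | 1, 0, 2 => -1
  | _, _, _ => 0 end.
Definition etad_nat (n : nat) : R := if n is 0%N then 1 else if lor then -1 else 1.

Lemma epsE i j k : Defs.eps R i j k = eps_nat i j k.
Proof. by have [->|->|->] := ord3P i; have [->|->|->] := ord3P j; have [->|->|->] := ord3P k. Qed.

Lemma etaE i j : Defs.eta R lor i j = if eqn i j then etad_nat i else 0.
Proof. by rewrite mxE /etad /etad_nat; have [->|->|->] := ord3P i; case: lor. Qed.

Lemma etad_nat_neq0 n : etad_nat n != 0.
Proof. by rewrite /etad_nat; case: n; case: lor; rewrite ?oppr_eq0 oner_eq0. Qed.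

Lemma etad_nat_sqr (i : 'I_3) : etad_nat i * etad_nat i = 1.
Proof. by rewrite /etad_nat; have [->|->|->] := ord3P i; case: lor; rewrite /= ?mulrNN mulr1. Qed.

Lemma eta_mulmx n (M : 'M[R]_(3, n)) i j : (Defs.eta R lor *m M) i j = etad_nat i * M i j.
Proof. by rewrite mxE big_ord3 !etaE; have [->|->|->] := ord3P i; rewrite /=; ring. Qed.

Lemma mulmx_eta m (M : 'M[R]_(m, 3)) i j : (M *m Defs.eta R lor) i j = M i j * etad_nat j.
Proof. by rewrite mxE big_ord3 !etaE; have [->|->|->] := ord3P j; rewrite /=; ring. Qed.

Definition veps (v : 'cV[R]_3) (i j : nat) : R :=
  v o0 0 * eps_nat 0 i j + v o1 0 * eps_nat 1 i j + v o2 0 * eps_nat 2 i j.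

Lemma admE (v : 'cV[R]_3) : adm lor v = \matrix_(d, b) (etad_nat d * veps v b d).
Proof.
apply/matrixP => d b; rewrite !mxE !big_ord3 !etaE !epsE /veps.
by have [->|->|->] := ord3P d; rewrite /=; ring.
Qed.

Lemma outerE (v u : 'cV[R]_3) : outer lor v u = \matrix_(i, j) (v i 0 * (u j 0 * etad_nat j)).
Proof. by apply/matrixP => i j; rewrite mxE big_ord1 mulmx_eta !mxE. Qed.

Lemma ipE (v : 'cV[R]_3) : ip lor v v =
  v o0 0 * etad_nat o0 * v o0 0 + v o1 0 * etad_nat o1 * v o1 0 + v o2 0 * etad_nat o2 * v o2 0.
Proof. by rewrite /ip mxE big_ord3 !mulmx_eta !mxE. Qed.

Lemma mulmx_mxE (f g : 'I_3 -> 'I_3 -> R) : (\matrix_(i, j) f i j) *m (\matrix_(i, j) g i j) =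
  \matrix_(i, j) (f i o0 * g o0 j + f i o1 * g o1 j + f i o2 * g o2 j).
Proof. by apply/matrixP => i j; rewrite !mxE big_ord3 !mxE. Qed.

Lemma addmx_mxE (f g : 'I_3 -> 'I_3 -> R) :
  (\matrix_(i, j) f i j) + (\matrix_(i, j) g i j) = \matrix_(i, j) (f i j + g i j).
Proof. by apply/matrixP => i j; rewrite !mxE. Qed.

Lemma oppmx_mxE (f : 'I_3 -> 'I_3 -> R) : - (\matrix_(i, j) f i j) = \matrix_(i, j) (- f i j).
Proof. by apply/matrixP => i j; rewrite !mxE. Qed.

Lemma scalemx_mxE a (f : 'I_3 -> 'I_3 -> R) :
  a *: (\matrix_(i, j) f i j) = \matrix_(i, j) (a * f i j).
Proof. by apply/matrixP => i j; rewrite !mxE. Qed.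

Lemma mxtrace_mxE (f : 'I_3 -> 'I_3 -> R) :
  \tr (\matrix_(i, j) f i j) = f o0 o0 + f o1 o1 + f o2 o2.
Proof. by rewrite /mxtrace big_ord3 !mxE. Qed.

Lemma scalar_mxE (a : R) : a%:M = \matrix_(i, j) (if eqn i j then a else 0) :> 'M[R]_3.
Proof. by apply/matrixP => i j; rewrite !mxE; change (eqn i j) with (i == j); case: (i == j). Qed.

Lemma gtr_mxE (f : 'I_3 -> 'I_3 -> R) :
  gtr lor (\matrix_(i, j) f i j) = \matrix_(i, j) (etad_nat i * f j i * etad_nat j).
Proof. by apply/matrixP => i j; rewrite /gtr mulmx_eta eta_mulmx !mxE. Qed.

Lemma up2E (M : 'M[R]_3) i j : up2 lor M i j = etad_nat i * M j i.
Proof.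
rewrite /up2 !big_ord3 /mco !eta_mulmx !etaE /etad_nat.
by have [->|->|->] := ord3P i; have [->|->|->] := ord3P j; case: lor; rewrite /=; ring.
Qed.

Lemma gtrZ a (F : 'M[R]_3) : gtr lor (a *: F) = a *: gtr lor F.
Proof. by rewrite /gtr linearZ /= -scalemxAr -scalemxAl. Qed.

Lemma admZ a (v : 'cV[R]_3) : adm lor (a *: v) = a *: adm lor v.
Proof. by rewrite !admE scalemx_mxE; apply/eq_mx => i j; rewrite /veps !mxE; ring. Qed.

End Coordinates.

Ltac coords := rewrite ?admE ?outerE ?ipE;
  rewrite !(mulmx_mxE, addmx_mxE, oppmx_mxE, scalemx_mxE, gtr_mxE, mxtrace_mxE, scalar_mxE).
Ltac eval_coords := cbv beta iota zeta delta [eps_nat etad_nat veps succ3 o0 o1 o2 nat_of_ord eqn].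

Section Ansatz.
Variable R : realFieldType.
Variable lor : bool.
Variables (v : 'cV[R]_3) (x y z lam : R).

Lemma gtr_adm : gtr lor (adm lor v) = - adm lor v.
Proof.
coords; apply/eq_mx => i j.
by have [->|->|->] := ord3P i; have [->|->|->] := ord3P j; eval_coords; case: lor; ring.
Qed.

Definition ansatz_mu : R := - (lam * x ^+ 2 + z ^+ 2) * ip lor v v.
Definition ansatz_nu : R := - (2 * x * z) * ip lor v v.

Let C := x *: adm lor v.
Let A := lam *: C.
Let B := y *: outer lor v v + z *: adm lor v.

Lemma four_eqs_ansatz : four_eqs lor lam ansatz_mu ansatz_nu A B C.
Proof.
rewrite /ansatz_mu /ansatz_nu /A /B /C; split; coords.
- by eval_coords; case: lor; field.
- by eval_coords; case: lor; ring.
- apply/eq_mx => i j.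
  by have [->|->|->] := ord3P i; have [->|->|->] := ord3P j; eval_coords; case: lor; field.
- apply/eq_mx => i j.
  by have [->|->|->] := ord3P i; have [->|->|->] := ord3P j; eval_coords; case: lor; ring.
Qed.

End Ansatz.

Section ClassicalYangBaxter.
Variable R : realFieldType.
Variable lor : bool.
Variable lam : R.

(* Coefficient on [e_p] of the bracket in [g_lam] of [sum_i F i e_i] and [sum_k G k e_k]. *)
Definition lie_coef (p : gidx) (F G : gidx -> R) : R :=
  let m1 := succ3 p.2 in let m2 := succ3 m1 in
  etad_nat R lor p.2 *
    (if p.1 then F (false, m1) * G (true, m2) - F (false, m2) * G (true, m1)
                 + (F (true, m1) * G (false, m2) - F (true, m2) * G (false, m1))
     else F (false, m1) * G (false, m2) - F (false, m2) * G (false, m1)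
          + lam * (F (true, m1) * G (true, m2) - F (true, m2) * G (true, m1))).

Lemma sc_contractE (F G : gidx -> R) p :
  \sum_i \sum_k sc lor lam i k p * F i * G k = lie_coef p F G.
Proof.
rewrite !big_gidx /sc !big_ord3 !epsE !etaE.
case: p => [[] p]; have [->|->|->] := ord3P p;
  by cbv beta iota zeta delta [lie_coef eps_nat etad_nat o0 o1 o2 nat_of_ord eqn fst snd succ3];
  ring.
Qed.

(* [eps] times [lam JJJ + JPP + PJP + PPJ] and [lam (PJJ + JPJ + JJP) + PPP]: for the ansatz,
   [[r, r]] is a combination of these two 3-tensors. *)
Definition inv_even (p q s : gidx) : R := eps_nat R p.2 q.2 s.2 *
  match p.1, q.1, s.1 with
  | false, false, false => lam
  | true, true, false | true, false, true | false, true, true => 1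
  | _, _, _ => 0 end.
Definition inv_odd (p q s : gidx) : R := eps_nat R p.2 q.2 s.2 *
  match p.1, q.1, s.1 with
  | true, false, false | false, true, false | false, false, true => lam
  | true, true, true => 1
  | _, _, _ => 0 end.

Variables (v : 'cV[R]_3) (x y z a b : R).

(* Coefficients on [J_i (x) J_j] of [eta], [[v, .]] and [v v^t], in the index
   placement of [up2]. *)
Definition eta_up (i j : 'I_3) : R := if eqn i j then etad_nat R lor i else 0.
Definition adm_up (i j : 'I_3) : R := etad_nat R lor i * (etad_nat R lor j * veps v i j).
Definition outer_up (i j : 'I_3) : R :=
  etad_nat R lor i * (v j 0 * (v i 0 * etad_nat R lor i)).

(* [r' + K_tau] for the ansatz, with [a = alpha / tt] and [b = beta / tt]. *)
Definition ansatz_tensor : tensor2 R := fun p q =>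
  match p.1, q.1 with
  | false, false => lam * x * adm_up p.2 q.2 - b * lam * eta_up p.2 q.2
  | true, false => y * outer_up p.2 q.2 + z * adm_up p.2 q.2 + a * eta_up p.2 q.2
  | false, true => - (y * outer_up q.2 p.2 + z * adm_up q.2 p.2) + a * eta_up p.2 q.2
  | true, true => x * adm_up p.2 q.2 - b * eta_up p.2 q.2
  end.

Lemma cyb_ansatz_tensor p q s : cyb lor lam ansatz_tensor p q s =
  (a ^+ 2 + lam * b ^+ 2 + (lam * x ^+ 2 + z ^+ 2) * ip lor v v) * inv_even p q s
  + (- (2 * a * b) + 2 * x * z * ip lor v v) * inv_odd p q s.
Proof.
rewrite /cyb ipE (sc_contractE (fun i => ansatz_tensor i q) (fun k => ansatz_tensor k s))
  (sc_contractE (fun j => ansatz_tensor p j) (fun k => ansatz_tensor k s))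
  (sc_contractE (fun j => ansatz_tensor p j) (fun k => ansatz_tensor q k)).
case: p => [pb p]; have [->|->|->] := ord3P p;
case: q => [qb q]; have [->|->|->] := ord3P q;
case: s => [sb s]; have [->|->|->] := ord3P s;
case: pb; case: qb; case: sb;
cbv beta iota zeta delta [lie_coef ansatz_tensor adm_up outer_up eta_up inv_even inv_odd
  veps eps_nat etad_nat o0 o1 o2 nat_of_ord eqn fst snd succ3];
case: lor; ring.
Qed.

End ClassicalYangBaxter.

Section CompatibleRMatrix.
Variable R : realFieldType.
Variable lor : bool.

Lemma rprime_antisym (A B C : 'M[R]_3) :
  gtr lor A = - A -> gtr lor C = - C -> antisym (rprime lor A B C).
Proof.
have skew (M : 'M[R]_3) i j : gtr lor M = - M -> up2 lor M i j = - up2 lor M j i.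
  move=> /matrixP/(_ j i); rewrite /gtr mulmx_eta eta_mulmx !mxE !up2E => hM.
  rewrite -[M j i]opprK -hM mulrN; congr (- _).
  by rewrite mulrC -!mulrA etad_nat_sqr mulr1.
by move=> hA hC [[] i] [[] j]; rewrite /rprime /= ?opprK // skew.
Qed.

Lemma eq_cyb (lam : R) (r1 r2 : tensor2 R) p q s :
  r1 =2 r2 -> cyb lor lam r1 p q s = cyb lor lam r2 p q s.
Proof.
move=> r12; rewrite /cyb.
by congr (_ + _ + _); apply: eq_bigr => i _; apply: eq_bigr => k _; rewrite !r12.
Qed.

Variables (v : 'cV[R]_3) (x y z lam alpha beta : R).
Let C := x *: adm lor v.
Let A := lam *: C.
Let B := y *: outer lor v v + z *: adm lor v.

Lemma gtr_ansatzC : gtr lor C = - C.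
Proof. by rewrite /C gtrZ gtr_adm scalerN. Qed.

Lemma gtr_ansatzA : gtr lor A = - A.
Proof. by rewrite /A gtrZ gtr_ansatzC scalerN. Qed.

Lemma ansatz_tensorE p q :
  rprime lor A B C p q + Ktau lor lam alpha beta p q
  = ansatz_tensor lor lam v x y z (alpha / ttb lam alpha beta) (beta / ttb lam alpha beta) p q.
Proof.
case: p => [[] i]; case: q => [[] j];
  by rewrite /rprime /Ktau /ansatz_tensor /= etaE !up2E /A /B /C ?admE ?outerE
    ?(scalemx_mxE, addmx_mxE) !mxE /adm_up /outer_up /eta_up; ring.
Qed.

Lemma compatible_ansatz : ttb lam alpha beta != 0 ->
  ansatz_mu lor v x z lam = muT lam alpha beta -> ansatz_nu lor v x z = nuT lam alpha beta ->
  compatible_rmatrix lor lam alpha beta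
    (fun p q => rprime lor A B C p q + Ktau lor lam alpha beta p q).
Proof.
rewrite /ansatz_mu /ansatz_nu => ht hmu hnu.
exists (rprime lor A B C); split; first exact: rprime_antisym gtr_ansatzA gtr_ansatzC.
split=> // p q s; rewrite (eq_cyb _ _ _ _ ansatz_tensorE) cyb_ansatz_tensor.
have -> : (alpha / ttb lam alpha beta) ^+ 2 + lam * (beta / ttb lam alpha beta) ^+ 2
          = muT lam alpha beta by rewrite /muT; field.
have -> : - (2 * (alpha / ttb lam alpha beta) * (beta / ttb lam alpha beta))
          = nuT lam alpha beta by rewrite /nuT; field.
by rewrite -hmu -hnu; ring.
Qed.

End CompatibleRMatrix.

Section Converse.
Variable R : realFieldType.
Variable lor : bool.

(* Components of the Euclidean cross product in the coordinates of g. *)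
Definition cross (v w : 'cV[R]_3) (i : 'I_3) : R :=
  v (succ3 i) 0 * w (succ3 (succ3 i)) 0 - v (succ3 (succ3 i)) 0 * w (succ3 i) 0.

Definition sqnorm3 (v : 'cV[R]_3) : R := v o0 0 ^+ 2 + v o1 0 ^+ 2 + v o2 0 ^+ 2.

Lemma sqnorm3_eq0 (v : 'cV[R]_3) : (sqnorm3 v == 0) = (v == 0).
Proof.
rewrite /sqnorm3 paddr_eq0 ?addr_ge0 ?sqr_ge0 // paddr_eq0 ?sqr_ge0 // !sqrf_eq0.
apply/idP/eqP => [/andP[/andP[/eqP v0 /eqP v1] /eqP v2] | ->]; last by rewrite !mxE eqxx.
by apply/matrixP => i j; rewrite ord1 mxE; have [->|->|->] := ord3P i.
Qed.

Lemma eq0_of_mul_coords (v : 'cV[R]_3) (c : R) :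
  v != 0 -> (forall j, c * v j 0 = 0) -> c = 0.
Proof.
rewrite -sqnorm3_eq0 => hv hc; apply: (mulIf hv); rewrite mul0r.
have -> : c * sqnorm3 v = c * v o0 0 * v o0 0 + c * v o1 0 * v o1 0 + c * v o2 0 * v o2 0.
  by rewrite /sqnorm3; ring.
by rewrite !hc !mul0r !addr0.
Qed.

(* Lagrange's identity [|v|^2 w - <v,w> v = (v x w) x v]. *)
Lemma colinear_of_cross_eq0 (v w : 'cV[R]_3) :
  v != 0 -> (forall i, cross v w i = 0) -> exists z, w = z *: v.
Proof.
rewrite -sqnorm3_eq0 => hv hc.
pose s := w o0 0 * v o0 0 + w o1 0 * v o1 0 + w o2 0 * v o2 0.
exists (s / sqnorm3 v); apply/matrixP => i j; rewrite ord1 mxE mulrAC.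
apply: (mulIf hv); rewrite divfK //; apply/eqP; rewrite -subr_eq0; apply/eqP.
have -> : w i 0 * sqnorm3 v - s * v i 0 = v (succ3 (succ3 i)) 0 * cross v w (succ3 i)
                                         - v (succ3 i) 0 * cross v w (succ3 (succ3 i)).
  by rewrite /sqnorm3 /s /cross; have [->|->|->] := ord3P i; eval_coords; ring.
by rewrite !hc !mulr0 subr0.
Qed.

Lemma cross_eq0_of_products (v w : 'cV[R]_3) : v != 0 ->
  (forall i j, i != j -> cross v w i * v j 0 = 0) ->
  cross v w o0 * v o0 0 = cross v w o1 * v o1 0 ->
  cross v w o0 * v o0 0 = cross v w o2 * v o2 0 ->
  forall i, cross v w i = 0.
Proof.
move=> hv hoff e1 e2.
have orth : cross v w o0 * v o0 0 + cross v w o1 * v o1 0 + cross v w o2 * v o2 0 = 0.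
  by rewrite /cross; eval_coords; ring.
have /eqP : cross v w o0 * v o0 0 *+ 3 = 0.
  by rewrite !mulrS mulr0n addr0 addrA {2}e1 {2}e2.
rewrite mulrn_eq0 /= => /eqP d0.
move=> i; apply: (eq0_of_mul_coords hv) => j.
have [<-|ij] := eqVneq i j; last exact: hoff.
by have [->|->|->] := ord3P i; rewrite -?e1 -?e2.
Qed.

Lemma scaled_eq0 (k q l r : R) : k != 0 -> l = r -> k * q = l - r -> q = 0.
Proof. by move=> hk -> /eqP; rewrite subrr mulf_eq0 (negPf hk) => /eqP. Qed.

Lemma cross_eq0_of_four_eqs (v w : 'cV[R]_3) (x y lam mu nu : R) : v != 0 -> y != 0 ->
  four_eqs lor lam mu nu (lam *: (x *: adm lor v)) (y *: outer lor v v + adm lor w)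
    (x *: adm lor v) ->
  forall i, cross v w i = 0.
Proof.
move=> hv hy [_ _ + _]; coords => /eq_mx_fun E.
have k0 (i j : 'I_3) : -2 * y * etad_nat R lor i * etad_nat R lor j != 0.
  by rewrite !mulf_neq0 ?etad_nat_neq0 ?oppr_eq0 ?pnatr_eq0.
apply: cross_eq0_of_products => //.
- move=> i j ij; apply: (scaled_eq0 (k0 i j) (E i j)).
  by move: ij; have [->|->|->] := ord3P i; have [->|->|->] := ord3P j;
    rewrite ?eqxx // => _; rewrite /cross; eval_coords; case: lor; ring.
- apply/eqP; rewrite -subr_eq0; apply/eqP.
  apply: (scaled_eq0 (k0 o1 o1) (f_equal2 (fun a b => a - b) (E o0 o0) (E o1 o1))).
  by rewrite /cross; eval_coords; case: lor; ring.
- apply/eqP; rewrite -subr_eq0; apply/eqP.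
  apply: (scaled_eq0 (k0 o1 o1) (f_equal2 (fun a b => a - b) (E o0 o0) (E o2 o2))).
  by rewrite /cross; eval_coords; case: lor; ring.
Qed.

Lemma four_eqs_ansatz_inv (v w : 'cV[R]_3) (x y lam mu nu : R) :
  v != 0 -> y != 0 -> lam != 0 ->
  four_eqs lor lam mu nu (lam *: (x *: adm lor v)) (y *: outer lor v v + adm lor w)
    (x *: adm lor v) ->
  exists z, [/\ w = z *: v, ansatz_mu lor v x z lam = mu & ansatz_nu lor v x z = nu].
Proof.
move=> hv hy hlam E.
have [z wE] := colinear_of_cross_eq0 hv (cross_eq0_of_four_eqs hv hy E).
exists z; rewrite wE admZ in E.
case: E (four_eqs_ansatz lor v x y z lam) => e1 e2 _ _ [f1 f2 _ _]; split => //.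
- by apply: (mulIf hlam); rewrite -e1 f1.
- by rewrite -e2 f2.
Qed.

End Converse.

Unset Implicit Arguments.

Theorem mainTheorem4 (R : realFieldType) (lor : bool) (lam alpha beta : R) :
  lam != 0 -> ttb lam alpha beta != 0 ->
  (forall (v : 'cV[R]_3) (x y z : R),
      v != 0 ->
      - (lam * x ^+ 2 + z ^+ 2) * ip lor v v = muT lam alpha beta ->
      - (2 * x * z) * ip lor v v = nuT lam alpha beta ->
      let C := x *: adm lor v in
      let A := lam *: C in
      let B := y *: outer lor v v + z *: adm lor v in
      [/\ gtr lor A = - A, gtr lor C = - C,
          four_eqs lor lam (muT lam alpha beta) (nuT lam alpha beta) A B C
        & compatible_rmatrix lor lam alpha beta
            (fun p q => rprime lor A B C p q + Ktau lor lam alpha beta p q)])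
  /\
  (forall (v w : 'cV[R]_3) (x y : R) (A B C : 'M[R]_3),
      v != 0 -> y != 0 ->
      C = x *: adm lor v -> A = lam *: C ->
      B = y *: outer lor v v + adm lor w ->
      four_eqs lor lam (muT lam alpha beta) (nuT lam alpha beta) A B C ->
      exists z : R, [/\ w = z *: v,
        - (lam * x ^+ 2 + z ^+ 2) * ip lor v v = muT lam alpha beta
      & - (2 * x * z) * ip lor v v = nuT lam alpha beta]).
Proof.
move=> hlam ht; split.
- move=> v x y z _ hmu hnu C A B; split.
  + exact: gtr_ansatzA.
  + exact: gtr_ansatzC.
  + by rewrite -hmu -hnu; exact: four_eqs_ansatz.
  + exact: compatible_ansatz.
- move=> v w x y A B C hv hy -> -> ->.
  by move/(four_eqs_ansatz_inv hv hy hlam).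
Qed.
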